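(* Let $F$ be a field of characteristic different from $2$, let $a_1,a_2\in F^\times$ be such that $E=F(\sqrt{a_1},\sqrt{a_2})$ is Galois over $F$ with $G=\mathrm{Gal}(E/F)\cong\mathbb Z/2\mathbb Z\times\mathbb Z/2\mathbb Z$, and let $\sigma_1,\sigma_2\in G$ be the generators with $\sigma_1(\sqrt{a_1})=\sqrt{a_1}$, $\sigma_1(\sqrt{a_2})=-\sqrt{a_2}$, $\sigma_2(\sqrt{a_2})=\sqrt{a_2}$, $\sigma_2(\sqrt{a_1})=-\sqrt{a_1}$. Then, in the $\mathbb Z[G]$-module $E^\times$, \[\ker(1-\sigma_1)(1-\sigma_2)=\ker(1-\sigma_1)\cdot\ker(1-\sigma_2).\]
   Context: $E^\times$ is a $\mathbb Z[G]$-module via $(\sum_g c_g g)\cdot\gamma=\prod_g g(\gamma)^{c_g}$. Thus $\ker(1-\sigma_i)=\{e\in E^\times: e/\sigma_i(e)=1\}$ and $\ker(1-\sigma_1)(1-\sigma_2)=\{e\in E^\times: e\,\sigma_1\sigma_2(e)=\sigma_1(e)\,\sigma_2(e)\}$. For subsets $A,B$, $A\cdot B=\{ab:a\in A,b\in B\}$. *)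

From HB Require Import structures.
From mathcomp Require Import all_boot all_order all_algebra all_fingroup all_solvable all_field.
Set Implicit Arguments. Unset Strict Implicit. Unset Printing Implicit Defensive.
Import GRing.Theory.
Local Open Scope ring_scope.

(* Z[G]-module structure on E^x, for a Galois automorphism group acting on L.
   ker(1 - s) = { e in E^x | e / s e = 1 } *)
Definition ker1m (F : fieldType) (L : splittingFieldType F)
  (s : gal_of {:L}) : pred L := fun e => (e != 0) && (e / s e == 1).

(* ker (1 - s1)(1 - s2) = { e in E^x | e * s1(s2 e) = s1 e * s2 e } *)
Definition ker2m (F : fieldType) (L : splittingFieldType F)
  (s1 s2 : gal_of {:L}) : pred L :=
  fun e => (e != 0) && (e * s1 (s2 e) == s1 e * s2 e).

Definition setmul (T : pzRingType) (A B : pred T) : T -> Prop :=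
  fun x => exists2 a, a \in A & exists2 b, b \in B & x = a * b.

From HB Require Import structures.
From mathcomp Require Import all_boot all_order all_algebra all_fingroup all_solvable all_field.
Import GRing.Theory.
Local Open Scope ring_scope.

(* For [e] in the kernel of (1 - s1)(1 - s2), the ratio [c = e / s2 e] is fixed by [s1] and
   inverted by [s2].  If [c != -1] then [b = 1 + c] is fixed by [s1] and [s2 b = b / c], so
   [e / b] is fixed by [s2]; if [c = -1], the element [sqrt a1] plays the role of [b]. *)

Section GaloisGenerators.

Context {F : fieldType} {L : splittingFieldType F}.

Lemma gal_eq_on_base (x y : gal_of {:L}) : {in 1%VS, x =1 y}.
Proof. by move=> _ /vlineP[k ->]; rewrite !rmorph_alg. Qed.

Lemma gal_eq_on_Fadjoin (K : {subfield L}) (x y : gal_of {:L}) (r : L) :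
  {in K, x =1 y} -> x r = y r -> {in <<K; r>>%VS, x =1 y}.
Proof.
move=> xyK xyr _ /Fadjoin_polyP[p /polyOverP Kp ->].
rewrite -!horner_map /= xyr; congr (_.[_]).
by apply/polyP=> i; rewrite !coef_map /= xyK.
Qed.

Lemma gal_eq_Fadjoin2 {r1 r2 : L} {x y : gal_of {:L}} :
  << <<1%VS; r1>>; r2>>%VS = fullv -> x r1 = y r1 -> x r2 = y r2 -> x = y.
Proof.
move=> gen xy1 xy2; apply/eqP/gal_eqP => z _.
have : z \in << <<1%VS; r1>>; r2>>%VS by rewrite gen memvf.
exact/gal_eq_on_Fadjoin/xy2/gal_eq_on_Fadjoin/xy1/gal_eq_on_base.
Qed.

End GaloisGenerators.

Section KernelProduct.

Context {F : fieldType} {L : splittingFieldType F} {s1 s2 : gal_of {:L}}.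

Lemma ker1mP (s : gal_of {:L}) (e : L) :
  reflect (e != 0 /\ s e = e) (e \in ker1m s).
Proof.
rewrite unfold_in /ker1m; apply: (iffP andP) => -[e0 se]; split=> //.
  exact/esym/divr1_eq/eqP.
by rewrite se divff.
Qed.

Hypothesis s12C : forall z, s1 (s2 z) = s2 (s1 z).

Lemma mul_ker1m_ker2m (a b : L) :
  a \in ker1m s1 -> b \in ker1m s2 -> a * b \in ker2m s1 s2.
Proof.
move=> /ker1mP[a0 s1a] /ker1mP[b0 s2b].
rewrite unfold_in /ker2m mulf_neq0 //= !rmorphM /= s2b s1a s12C s1a.
by apply/eqP; rewrite [LHS]mulrACA [RHS]mulrACA [b * _]mulrC.
Qed.

Hypothesis s2K : forall z, s2 (s2 z) = z.

Lemma ker2m_ratio {e : L} : e \in ker2m s1 s2 ->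
  s1 (e / s2 e) = e / s2 e /\ s2 (e / s2 e) = (e / s2 e)^-1.
Proof.
rewrite unfold_in /ker2m => /andP[e0 /eqP he]; have s2e0 : s2 e != 0 by rewrite fmorph_eq0.
split; last by rewrite rmorphM fmorphV /= s2K invfM invrK mulrC.
rewrite rmorphM fmorphV /=; apply/eqP.
by rewrite eqr_div ?fmorph_eq0 // he.
Qed.

Context {r : L}.
Hypotheses (r0 : r != 0) (s1r : s1 r = r) (s2r : s2 r = - r).

Lemma ker2m_sub_ker1m_mul (e : L) :
  e \in ker2m s1 s2 -> setmul (ker1m s1) (ker1m s2) e.
Proof.
move=> e_ker2; have [s1c s2c] := ker2m_ratio e_ker2.
move: e_ker2; rewrite unfold_in /ker2m => /andP[e0 _].
have s2e0 : s2 e != 0 by rewrite fmorph_eq0.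
set c := e / s2 e in s1c s2c.
have c0 : c != 0 by rewrite mulf_neq0 ?invr_eq0.
suff [b /ker1mP[b0 s1b] s2eb] : exists2 b, b \in ker1m s1 & s2 (e / b) = e / b.
  exists b; first exact/ker1mP.
  exists (e / b); last by rewrite mulrC divfK.
  by apply/ker1mP; rewrite mulf_neq0 ?invr_eq0.
have [cN1 | cN1] := eqVneq c (-1).
  have s2e : s2 e = - e.
    by have := divfK s2e0 e; rewrite -/c cN1 mulN1r => /eqP; rewrite eqr_oppLR => /eqP.
  by exists r; [apply/ker1mP | rewrite rmorphM fmorphV /= s2e s2r invrN mulrNN].
have b0 : 1 + c != 0 by rewrite addrC addr_eq0.
exists (1 + c); first by apply/ker1mP; rewrite rmorphD rmorph1 /= s1c.
have s2b : s2 (1 + c) = (1 + c) / c by rewrite rmorphD rmorph1 /= s2c mulrDl divff // mul1r addrC.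
rewrite rmorphM fmorphV /= s2b invfM invrK mulrA mulrAC; congr (_ * _).
by rewrite /c mulrC divfK.
Qed.

End KernelProduct.

Theorem corollary1 (F : fieldType) (L : splittingFieldType F)
  (hchar : (2 \notin [pchar F])%N)
  (a1 a2 : F) (ha1 : a1 != 0) (ha2 : a2 != 0)
  (r1 r2 : L) (hr1 : r1 ^+ 2 = a1%:A) (hr2 : r2 ^+ 2 = a2%:A)
  (hgen : << <<1%VS; r1>>; r2>>%VS = fullv)
  (hgal : galois 1%VS {:L})
  (hG : ('Gal({:L} / 1%VS) \isog [set: 'Z_2 * 'Z_2])%g)
  (s1 s2 : gal_of {:L})
  (h11 : s1 r1 = r1) (h12 : s1 r2 = - r2)
  (h22 : s2 r2 = r2) (h21 : s2 r1 = - r1) :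
  forall e : L, e \in ker2m s1 s2 <-> setmul (ker1m s1) (ker1m s2) e.
Proof.
have s12C z : s1 (s2 z) = s2 (s1 z).
  rewrite -!galM ?memvf //; suff -> : (s2 * s1)%g = (s1 * s2)%g by [].
  apply: (gal_eq_Fadjoin2 hgen); rewrite !galM ?memvf //.
    by rewrite h21 h11 rmorphN /= h11 h21.
  by rewrite h22 h12 rmorphN /= h22.
have s2K z : s2 (s2 z) = z.
  rewrite -galM ?memvf //; suff -> : (s2 * s2)%g = 1%g by rewrite gal_id.
  by apply: (gal_eq_Fadjoin2 hgen); rewrite galM ?memvf // !gal_id ?h22 // h21 rmorphN /= h21 opprK.
have r10 : r1 != 0.
  by apply: contraNneq ha1 => r10; move/eqP: hr1; rewrite r10 expr0n eq_sym scaler_eq0 oner_eq0 orbF.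
move=> e; split; first exact: (ker2m_sub_ker1m_mul s2K r10 h11 h21).
by case=> a ker1a [b ker2b ->]; exact: mul_ker1m_ker2m s12C a b ker1a ker2b.
Qed.
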